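(* Let $S=\sum_{i=1}^r u_i^{\otimes 3}$ be a symmetric tensor in $\mathbb{C}^{n\times n\times n}$, where $u_1,\dots,u_r\in\mathbb{C}^n$ are pairwise orthogonal nonzero vectors. Then the slices of $S$ pairwise commute. Moreover, the following are equivalent: (i) all the $u_i$ are isotropic; (ii) the product of any two (possibly equal) slices of $S$ is the zero matrix. Consequently, if (i) holds, then in any other decomposition $S=\sum_{i=1}^q v_i^{\otimes 3}$ with $v_1,\dots,v_q$ pairwise orthogonal nonzero vectors, all the $v_i$ are isotropic.
   Context: The $k$-th slice of a symmetric tensor $S$ is $S_k=(S_{ijk})_{1\le i,j\le n}$. $\langle x,y\rangle=\sum_i x_iy_i$ on $\mathbb{C}^n$ (bilinear, non-Hermitian); $u,v$ are orthogonal if $\langle u,v\rangle=0$; a nonzero vector $v$ is isotropic if $\langle v,v\rangle=0$. *)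

From HB Require Import structures.
From mathcomp Require Import all_boot all_order all_algebra.
Set Implicit Arguments. Unset Strict Implicit. Unset Printing Implicit Defensive.
Import Order.TTheory GRing.Theory Num.Theory.
Local Open Scope ring_scope.

(* Bilinear (non-Hermitian) form <x,y> = sum_i x_i y_i on row vectors. *)
Definition bdot (R : numClosedFieldType) (n : nat) (x y : 'rV[R]_n) : R :=
  \sum_(i < n) x 0 i * y 0 i.

Definition orthogonal_vec (R : numClosedFieldType) (n : nat) (x y : 'rV[R]_n) : Prop :=
  bdot x y = 0.

Definition isotropic (R : numClosedFieldType) (n : nat) (v : 'rV[R]_n) : Prop :=
  v != 0 /\ bdot v v = 0.

Definition tensor3 (R : numClosedFieldType) (n : nat) := 'I_n -> 'I_n -> 'I_n -> R.

Definition sym_decomp (R : numClosedFieldType) (n r : nat) (u : 'I_r -> 'rV[R]_n)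
  : tensor3 R n :=
  fun i j k => \sum_(a < r) u a 0 i * u a 0 j * u a 0 k.

Definition slice (R : numClosedFieldType) (n : nat) (S : tensor3 R n) (k : 'I_n) : 'M[R]_n :=
  \matrix_(i, j) S i j k.

From HB Require Import structures.
From mathcomp Require Import all_boot all_order all_algebra.
From mathcomp Require Import ring.
Set Implicit Arguments. Unset Strict Implicit. Unset Printing Implicit Defensive.
Import GRing.Theory Num.Theory.
Local Open Scope ring_scope.

(* Contracting against u_b a combination of pairwise orthogonal vectors u_a
   keeps only the b-th term.  Applied inside a product of slices this gives
   (S_k S_l)_ij = sum_a <u_a,u_a> u_ai u_aj u_ak u_al, which is symmetric in
   k, l and vanishes when every u_a is isotropic.  Conversely, if S_j S_j = 0
   then sum_a (<u_a,u_a> u_aj^3) u_a = 0, and contracting with u_b at a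
   coordinate j where u_bj != 0 forces <u_b,u_b> = 0.  The last claim follows
   because the slices only depend on the tensor, not on the decomposition. *)

Lemma rowV_neq0 (R : pzRingType) (n : nat) (v : 'rV[R]_n) :
  v != 0 -> exists j, v 0 j != 0.
Proof.
move=> v_neq0; apply/existsP; apply: contraNT v_neq0.
rewrite negb_exists => /forallP v0; apply/eqP/rowP => j.
by rewrite mxE; apply/eqP; rewrite -[_ == _]negbK v0.
Qed.

Lemma slice_ext (R : numClosedFieldType) (n : nat) (S T : tensor3 R n) :
  (forall i j k, S i j k = T i j k) -> slice S =1 slice T.
Proof. by move=> eqST k; apply/matrixP => i j; rewrite !mxE eqST. Qed.

Section OrthogonalDecomposition.
Variables (R : numClosedFieldType) (n r : nat) (u : 'I_r -> 'rV[R]_n).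
Hypothesis u_orth : forall a b, a != b -> orthogonal_vec (u a) (u b).

Lemma bdot_orth_combination (f : 'I_r -> R) b :
  \sum_(m < n) u b 0 m * (\sum_(a < r) f a * u a 0 m) = f b * bdot (u b) (u b).
Proof.
under eq_bigr do rewrite mulr_sumr.
rewrite exchange_big /= (bigD1 b) //= [X in _ + X]big1 ?addr0 => [|a ab].
  by rewrite /bdot mulr_sumr; apply: eq_bigr => m _; ring.
have := u_orth ab; rewrite /orthogonal_vec /bdot => uab0.
transitivity (f a * \sum_(m < n) u a 0 m * u b 0 m); last by rewrite uab0 mulr0.
by rewrite mulr_sumr; apply: eq_bigr => m _; ring.
Qed.

Lemma mul_slice_sym_decompE k l i j :
  (slice (sym_decomp u) k *m slice (sym_decomp u) l) i j =
  \sum_(a < r) bdot (u a) (u a) * (u a 0 i * u a 0 j * u a 0 k * u a 0 l).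
Proof.
rewrite mxE.
under eq_bigr => m _ do rewrite !mxE /sym_decomp big_distrl /=.
rewrite exchange_big /=; apply: eq_bigr => a _.
transitivity (u a 0 i * u a 0 k *
  \sum_(m < n) u a 0 m * \sum_(b < r) (u b 0 j * u b 0 l) * u b 0 m).
  rewrite mulr_sumr; apply: eq_bigr => m _; rewrite !mulr_sumr.
  by apply: eq_bigr => b _; ring.
by rewrite bdot_orth_combination; ring.
Qed.

Lemma mul_sliceC k l :
  slice (sym_decomp u) k *m slice (sym_decomp u) l
  = slice (sym_decomp u) l *m slice (sym_decomp u) k.
Proof.
apply/matrixP => i j; rewrite !mul_slice_sym_decompE.
by apply: eq_bigr => a _; ring.
Qed.

Lemma isotropic_mul_slice0 :
  (forall a, isotropic (u a)) ->
  forall k l, slice (sym_decomp u) k *m slice (sym_decomp u) l = 0.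
Proof.
move=> u_iso k l; apply/matrixP => i j; rewrite mul_slice_sym_decompE mxE.
by apply: big1 => a _; case: (u_iso a) => _ ->; rewrite mul0r.
Qed.

Lemma mul_slice0_isotropic :
  (forall a, u a != 0) ->
  (forall k l, slice (sym_decomp u) k *m slice (sym_decomp u) l = 0) ->
  forall b, isotropic (u b).
Proof.
move=> u_nz slice0 b; split; first exact: u_nz.
have [j ubj_neq0] := rowV_neq0 (u_nz b).
pose f a := bdot (u a) (u a) * u a 0 j ^+ 3.
have comb0 i : \sum_(a < r) f a * u a 0 i = 0.
  move/matrixP/(_ i j): (slice0 j j); rewrite mul_slice_sym_decompE mxE => prod0.
  by rewrite -[RHS]prod0; apply: eq_bigr => a _; rewrite /f; ring.
have : f b * bdot (u b) (u b) = 0.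
  by rewrite -bdot_orth_combination big1 // => m _; rewrite comb0 mulr0.
by move/eqP; rewrite /f !mulf_eq0 (negbTE ubj_neq0) /= orbF orbb => /eqP.
Qed.

End OrthogonalDecomposition.

Theorem proposition28 (R : numClosedFieldType) (n r : nat) (u : 'I_r -> 'rV[R]_n)
  (u_nz : forall a, u a != 0)
  (u_orth : forall a b, a != b -> orthogonal_vec (u a) (u b)) :
  (forall k l : 'I_n,
      slice (sym_decomp u) k *m slice (sym_decomp u) l
      = slice (sym_decomp u) l *m slice (sym_decomp u) k)
  /\ ((forall a, isotropic (u a)) <->
      (forall k l : 'I_n, slice (sym_decomp u) k *m slice (sym_decomp u) l = 0))
  /\ ((forall a, isotropic (u a)) ->
      forall (q : nat) (v : 'I_q -> 'rV[R]_n),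
        (forall b, v b != 0) ->
        (forall b c, b != c -> orthogonal_vec (v b) (v c)) ->
        (forall i j k, sym_decomp v i j k = sym_decomp u i j k) ->
        forall b, isotropic (v b)).
Proof.
split; first exact: mul_sliceC.
split.
  by split; [exact: isotropic_mul_slice0 | exact: mul_slice0_isotropic].
move=> u_iso q v v_nz v_orth eq_vu.
apply: mul_slice0_isotropic => // k l.
rewrite !(slice_ext eq_vu).
exact: isotropic_mul_slice0.
Qed.
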